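(* Let $E=E(R/\mathfrak m)$ and for an $R$-module $N$ let $N^\circ=\mathrm{Hom}_R(N,E)$. Then: (a) if $N^\circ$ is simple-$\mathcal F$-torsion-free, then $N$ is simple-$\mathcal F$-divisible; (b) if $N^\circ$ is simple-$\mathcal F$-divisible, then $N$ is simple-$\mathcal F$-torsion-free; (c) if $N$ is reflexive (the canonical map $N\to N^{\circ\circ}$ is an isomorphism), then the converses of (a) and (b) also hold.
   Context: Throughout, $R$ is a commutative Noetherian local ring with maximal ideal $\mathfrak m$, and $E(R/\mathfrak m)$ is the injective hull of $R/\mathfrak m$. $\mathcal F$ is a Gabriel topology on $R$: a nonempty set of ideals of $R$ such that (1) if $\mathfrak a\in\mathcal F$ and $\mathfrak a\subseteq\mathfrak b$ then $\mathfrak b\in\mathcal F$; (2) if $\mathfrak a,\mathfrak b\in\mathcal F$ then $\mathfrak a\cap\mathfrak b\in\mathcal F$; (3) if $\mathfrak b$ is an ideal and there is $\mathfrak a\in\mathcal F$ with $(\mathfrak b:r)\in\mathcal F$ for all $r\in\mathfrak a$, then $\mathfrak b\in\mathcal F$. For an $R$-module $X$ and ideal $\mathfrak a$, $X[\mathfrak a]=\{x\in X:\mathfrak a x=0\}$. $X$ is $\mathcal F$-torsion-free if $X[\mathfrak a]=0$ for all $\mathfrak a\in\mathcal F$, and $\mathcal F$-divisible if $\mathfrak aX=X$ for all $\mathfrak a\in\mathcal F$. $M$ is simple-$\mathcal F$-torsion-free if $M\neq0$, $M$ is $\mathcal F$-torsion-free, and for every submodule $0\neq U\subsetneq M$, $M/U$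 is not $\mathcal F$-torsion-free; $N$ is simple-$\mathcal F$-divisible if $N\ne0$, $N$ is $\mathcal F$-divisible, and no submodule $0\neq V\subsetneq N$ is $\mathcal F$-divisible. *)

From HB Require Import structures.
From mathcomp Require Import all_boot all_order all_algebra.
From mathcomp Require Import boolp classical_sets functions.
Set Implicit Arguments. Unset Strict Implicit. Unset Printing Implicit Defensive.
Import GRing.Theory.
Local Open Scope ring_scope.
Local Open Scope classical_set_scope.

Section Ideals.
Variable R : comNzRingType.

Definition is_ideal (I : set R) : Prop :=
  [/\ I 0, (forall x y, I x -> I y -> I (x + y)) &
      (forall r x, I x -> I (r * x))].

Definition finitely_generated (I : set R) : Prop :=
  exists s : seq R, (forall x, x \in s -> I x) /\
    (forall x, I x <-> exists c : 'I_(size s) -> R,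
                        x = \sum_(i < size s) c i * s`_i).

Definition noetherian_ring : Prop :=
  forall I : set R, is_ideal I -> finitely_generated I.

Definition maximal_ideal (m : set R) : Prop :=
  [/\ is_ideal m, ~ m 1 &
      (forall I : set R, is_ideal I -> m `<=` I -> I = m \/ I = setT)].

Definition local_ring_with_max (m : set R) : Prop :=
  maximal_ideal m /\ (forall m' : set R, maximal_ideal m' -> m' = m).

Definition colon (b : set R) (r : R) : set R := [set x | b (x * r)].

Definition gabriel_topology (F : set (set R)) : Prop :=
  [/\ (forall a, F a -> is_ideal a),
      (exists a, F a),
      (forall a b, F a -> is_ideal b -> a `<=` b -> F b),
      (forall a b, F a -> F b -> F (a `&` b)) &
      (forall b, is_ideal b ->
         (exists2 a, F a & forall r, a r -> F (colon b r)) -> F b)].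
End Ideals.

Section Modules.
Variables (R : comNzRingType) (F : set (set R)) (M : lmodType R).

Definition is_submodule (U : set M) : Prop :=
  [/\ U 0, (forall x y, U x -> U y -> U (x + y)) &
      (forall r x, U x -> U (r *: x))].

Definition zero_set : set M := [set 0].

Definition ann_sub (X : set M) (a : set R) : set M :=
  [set x | X x /\ forall r, a r -> r *: x = 0].

Definition ideal_times (a : set R) (X : set M) : set M :=
  [set v | exists n (r : 'I_n -> R) (x : 'I_n -> M),
     [/\ forall i, a (r i), forall i, X (x i) & v = \sum_(i < n) r i *: x i]].

Definition F_torsion_free : Prop :=
  forall a, F a -> ann_sub setT a = zero_set.

Definition F_divisible_sub (V : set M) : Prop :=
  forall a, F a -> ideal_times a V = V.

Definition F_divisible : Prop := F_divisible_sub setT.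

(* M/U is F-torsion-free, unfolded: (M/U)[a] = 0 for all a in F, i.e.
   every x with a x ⊆ U lies in U. *)
Definition quotient_F_torsion_free (U : set M) : Prop :=
  forall a, F a -> forall x : M, (forall r, a r -> U (r *: x)) -> U x.

Definition simple_F_torsion_free : Prop :=
  [/\ setT <> zero_set, F_torsion_free &
      forall U : set M, is_submodule U -> U <> zero_set -> U <> setT ->
        ~ quotient_F_torsion_free U].

Definition simple_F_divisible : Prop :=
  [/\ setT <> zero_set, F_divisible &
      forall V : set M, is_submodule V -> V <> zero_set -> V <> setT ->
        ~ F_divisible_sub V].
End Modules.

Section Injective.
Variables (R : comNzRingType).

Definition injective_module (E : lmodType R) : Prop :=
  forall (A B : lmodType R) (f : {linear A -> B}) (g : {linear A -> E}),
    injective f -> exists h : {linear B -> E}, forall x, h (f x) = g x.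

Definition essential_sub (E : lmodType R) (S : set E) : Prop :=
  is_submodule S /\
  forall U : set E, is_submodule U -> U <> [set 0] ->
    exists2 x, (U `&` S) x & x <> 0.

(* E is an injective hull of R/m : E is injective and contains an essential
   submodule isomorphic to R/m, i.e. the image of a linear map R -> E whose
   kernel is m. *)
Definition injective_hull_of_residue (m : set R) (E : lmodType R) : Prop :=
  injective_module E /\
  exists iota : {linear R^o -> E},
    [set r | iota r = 0] = m /\ essential_sub (range iota).
End Injective.

Section Hom.
Variables (R : comNzRingType) (U V : lmodType R).

Definition hom_pred : {pred U -> V} := fun f => `[< linear f >].

Lemma hom_pred_closed : subsemimod_closed hom_pred.
Proof.
split; [split|].
- by apply/asboolP => a u v /=; rewrite scaler0 addr0.
- move=> f g /asboolP Hf /asboolP Hg; apply/asboolP => a u v /=.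
  rewrite !fctE; move: (Hf a u v) (Hg a u v) => /= -> ->.
  by rewrite scalerDr addrACA.
- move=> a f /asboolP Hf; apply/asboolP => b u v /=.
  rewrite !fctE; move: (Hf b u v) => /= ->.
  by rewrite scalerDr !scalerA mulrC.
Qed.

HB.instance Definition _ := GRing.isSubmodClosed.Build R (U -> V) hom_pred
  hom_pred_closed.

Record rhom := RHom { hom_fun :> U -> V; hom_funP : hom_pred hom_fun }.
HB.instance Definition _ := [isSub for hom_fun].
HB.instance Definition _ := [Choice of rhom by <:].
HB.instance Definition _ := [SubChoice_isSubLmodule of rhom by <:].
End Hom.

(* N° = Hom_R(N, E) is  rhom N E *)

Section Dual.
Variables (R : comNzRingType) (N E : lmodType R).

Lemma eval_hom_subproof (n : N) : hom_pred (fun f : rhom N E => hom_fun f n).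
Proof. by apply/asboolP => a f g. Qed.

Definition eval_hom (n : N) : rhom (rhom N E) E := RHom (eval_hom_subproof n).

(* N is reflexive (w.r.t. E): the canonical map N -> N°° is an isomorphism;
   being R-linear, this amounts to it being bijective. *)
Definition reflexive_module : Prop := bijective eval_hom.
End Dual.

From HB Require Import structures.
From mathcomp Require Import all_boot all_order all_algebra.
From mathcomp Require Import boolp classical_sets functions.
Set Implicit Arguments. Unset Strict Implicit. Unset Printing Implicit Defensive.
Import GRing.Theory.
Local Open Scope ring_scope.
Local Open Scope classical_set_scope.

(* The argument is organized around orthogonality between a module X and its
   dual X°: S^⊥ = perp E S ⊆ X° is the set of functionals vanishing on S ⊆ X,
   and ⊥T = preperp T ⊆ X is the set of common zeros of T ⊆ X°.  After basic
   facts on linear maps, submodules, extension of maps into an injective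
   module, and (via Zorn) proper ideals of a local ring, we prove:
   - (aS)^⊥ = {g | a·g ⊆ S^⊥} and ⊥(aT) = {x | a·x ⊆ ⊥T}; hence the a-torsion
     of X° is (aX)^⊥ and, E being a cogenerator, the a-torsion of X is ⊥(aX°);
   - E is a cogenerator (hull_separates): for x outside a submodule U some
     f ∈ U^⊥ has f x ≠ 0; so U^⊥ = 0 forces U = X, and U ≠ 0 forces U^⊥ ≠ X°;
   - if X/U has no a-torsion and a is finitely generated, then U^⊥ = a·U^⊥
     (perp_divisible, again by injectivity of E);
   - if N is reflexive, functionals on N° are evaluations, so (⊥T)^⊥ ⊆ T.
   Parts (a) and (b) transport proper nonzero submodules along U ↦ U^⊥, and
   part (c) along T ↦ ⊥T, while the torsion formulas above match
   F-divisibility of one side with F-torsion-freeness of the other. *)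

Section AsLinear.
Variables (R : comNzRingType) (A B : lmodType R).

Definition as_linear (f : A -> B) (_ : linear f) : A -> B := f.

Variables (f : A -> B) (f_lin : linear f).
HB.instance Definition _ := GRing.isLinear.Build R A B *:%R (as_linear f_lin) f_lin.

Lemma lin0 : f 0 = 0. Proof. exact: (linear0 (as_linear f_lin)). Qed.
Lemma linD x y : f (x + y) = f x + f y. Proof. exact: (linearD (as_linear f_lin)). Qed.
Lemma linB x y : f (x - y) = f x - f y. Proof. exact: (linearB (as_linear f_lin)). Qed.
Lemma linZ r x : f (r *: x) = r *: f x.
Proof. exact: (linearZ_LR (as_linear f_lin)). Qed.
Lemma lin_sum n (v : 'I_n -> A) : f (\sum_(i < n) v i) = \sum_(i < n) f (v i).
Proof. exact: (linear_sum (as_linear f_lin)). Qed.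
End AsLinear.

Lemma comp_linear (R : comNzRingType) (A B C : lmodType R) (f : A -> B) (g : B -> C) :
  linear f -> linear g -> linear (g \o f).
Proof. by move=> f_lin g_lin r x y; rewrite /= f_lin g_lin. Qed.

Lemma hom_linear (R : comNzRingType) (X Y : lmodType R) (f : rhom X Y) :
  linear f.
Proof. exact/asboolP/(hom_funP f). Qed.

Section HomApply.
Variables (R : comNzRingType) (X Y : lmodType R).

Definition hom_of (h : X -> Y) (h_lin : linear h) : rhom X Y :=
  RHom (asboolT h_lin : hom_pred h).

Lemma hom_ext (f g : rhom X Y) : (forall x, f x = g x) -> f = g.
Proof. by move=> fg; apply: val_inj; apply/funext. Qed.

Lemma hom_add_apply (f g : rhom X Y) x : (f + g) x = f x + g x.
Proof. by []. Qed.

Lemma hom_scale_apply r (f : rhom X Y) x : (r *: f) x = r *: f x.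
Proof. by []. Qed.

Lemma hom_sum_apply n (f : 'I_n -> rhom X Y) x :
  (\sum_(i < n) f i) x = \sum_(i < n) f i x.
Proof. exact: (lin_sum (hom_linear (eval_hom Y x)) f). Qed.
End HomApply.

Section Submodules.
Variables (R : comNzRingType) (X : lmodType R).
Implicit Types (S U : set X) (a : set R).

Lemma submodule_sum U n (v : 'I_n -> X) :
  is_submodule U -> (forall i, U (v i)) -> U (\sum_(i < n) v i).
Proof. by case=> U0 UD _ Uv; elim/big_rec: _ => // i x _; apply: UD. Qed.

Lemma submodule_opp U x : is_submodule U -> U x -> U (- x).
Proof. by case=> _ _ UZ Ux; rewrite -scaleN1r; apply: UZ. Qed.

Lemma submodule_sub U x y : is_submodule U -> U x -> U y -> U (x - y).
Proof.
by move=> HU Ux Uy; case: (HU) => _ UD _; apply: UD => //; apply: submodule_opp.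
Qed.

Lemma zero_submodule : is_submodule (@zero_set _ X).
Proof.
by split=> [|x y -> ->|r x ->] //=; rewrite ?addr0 ?scaler0.
Qed.

Lemma ideal_times_submodule a S : is_ideal a -> is_submodule (ideal_times a S).
Proof.
case=> a0 _ aM; split.
- by exists 0%N, (fun=> 0), (fun=> 0); split=> [[]|[]|]; rewrite // big_ord0.
- move=> _ _ [n [r [x [ar Sx ->]]]] [k [r' [x' [ar' Sx' ->]]]].
  pose glue T (u : 'I_n -> T) (u' : 'I_k -> T) (i : 'I_(n + k)) :=
    match fintype.split i with inl j => u j | inr j => u' j end.
  exists (n + k)%N, (glue _ r r'), (glue _ x x'); split.
  + by move=> i; rewrite /glue; case: fintype.split.
  + by move=> i; rewrite /glue; case: fintype.split.
  + by rewrite big_split_ord /glue; congr (_ + _); apply: eq_bigr => i _;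
      rewrite ?(unsplitK (inl i)) ?(unsplitK (inr i)).
- move=> c _ [n [r [x [ar Sx ->]]]].
  exists n, (fun i => c * r i), x; split=> // [i|]; first exact: aM.
  by rewrite scaler_sumr; apply: eq_bigr => i _; rewrite scalerA.
Qed.

Lemma ideal_times_mem a S r x : a r -> S x -> ideal_times a S (r *: x).
Proof.
by move=> ar Sx; exists 1%N, (fun=> r), (fun=> x); rewrite big_ord1.
Qed.

Lemma ideal_times_sub {a U} : is_submodule U -> ideal_times a U `<=` U.
Proof.
move=> HU _ [n [r [x [_ Ux ->]]]]; apply: submodule_sum => // i.
by case: HU => _ _; apply.
Qed.

Lemma exists_nonmember S : S <> setT -> exists x, ~ S x.
Proof.
move=> ST; apply: contrapT => noX; apply: ST; apply/seteqP; split=> // x _.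
by apply: contrapT => Sx; apply: noX; exists x.
Qed.

Lemma exists_nonzero U :
  is_submodule U -> U <> @zero_set _ X -> exists2 x, U x & x <> 0.
Proof.
case=> U0 _ _ U_0; apply: contrapT => noX; apply: U_0; apply/seteqP.
split=> [x Ux|x /= ->] //=; apply: contrapT => x0; apply: noX; by exists x.
Qed.

Lemma image_submodule (P : lmodType R) (p : P -> X) (S : set P) :
  linear p -> is_submodule S -> is_submodule (p @` S).
Proof.
move=> p_lin [S0 SD SZ]; split.
- by exists 0 => //; rewrite (lin0 p_lin).
- move=> _ _ [y Sy <-] [z Sz <-].
  by exists (y + z); rewrite ?(linD p_lin) //; apply: SD.
- by move=> r _ [y Sy <-]; exists (r *: y); rewrite ?(linZ p_lin) //; apply: SZ.
Qed.
End Submodules.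

Section SubmoduleType.
Variables (R : comNzRingType) (X : lmodType R) (S : set X) (HS : is_submodule S).

Definition submod_pred (_ : is_submodule S) : {pred X} := fun x => `[< S x >].

Lemma submod_pred_closed : subsemimod_closed (submod_pred HS).
Proof.
case: HS => S0 SD SZ; split; [split|].
- exact/asboolP.
- by move=> x y /asboolP Sx /asboolP Sy; apply/asboolP; apply: SD.
- by move=> r x /asboolP Sx; apply/asboolP; apply: SZ.
Qed.

HB.instance Definition _ :=
  GRing.isSubmodClosed.Build R X (submod_pred HS) submod_pred_closed.

Record submod_type := SubmodElt {
  submod_val :> X; submod_valP : submod_val \in submod_pred HS }.
HB.instance Definition _ := [isSub for submod_val].
HB.instance Definition _ := [Choice of submod_type by <:].
HB.instance Definition _ := [SubChoice_isSubLmodule of submod_type by <:].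

Lemma submod_val_linear : linear submod_val. Proof. by []. Qed.
HB.instance Definition _ :=
  GRing.isLinear.Build R submod_type X *:%R submod_val submod_val_linear.
End SubmoduleType.

(* In a local ring every proper ideal lies in the maximal ideal: by Zorn's
   lemma a proper ideal I is contained in a maximal ideal, which must be m. *)
Section LocalRing.
Variables (R : comNzRingType) (I : set R).

Definition proper_ideal_over (J : set R) : Prop := [/\ is_ideal J, I `<=` J & ~ J 1].

(* The union of a chain of proper ideals over I (or of the empty chain) is
   again one (resp. empty); this is the hypothesis of Zorn's lemma. *)
Lemma chain_union_proper (C : set (set R)) :
  C `<=` [set J | J = set0 \/ proper_ideal_over J] -> total_on C subset ->
  let J := \bigcup_(K in C) K in J = set0 \/ proper_ideal_over J.
Proof.
move=> CP Ctot J; have CJ K x : C K -> K x -> proper_ideal_over K.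
  by move=> CK Kx; case: (CP K CK) => // K0; rewrite K0 in Kx.
have [[K0 CK0 [x K0x]]|nonempty] :=
  pselect (exists2 K, C K & exists x, K x); last first.
  left; apply/seteqP; split=> // x [K CK Kx].
  by apply: nonempty; exists K; last exists x.
have [[K00 _ _] IK0 _] := CJ _ _ CK0 K0x; right; split.
- split; first by exists K0.
  + move=> y z [K1 CK1 K1y] [K2 CK2 K2z].
    have [[_ D1 _] _ _] := CJ _ _ CK1 K1y; have [[_ D2 _] _ _] := CJ _ _ CK2 K2z.
    have [K12|K21] := Ctot _ _ CK1 CK2.
    * by exists K2 => //; apply: D2 => //; apply: K12.
    * by exists K1 => //; apply: D1 => //; apply: K21.
  + move=> r y [K CK Ky]; have [[_ _ M] _ _] := CJ _ _ CK Ky.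
    by exists K => //; apply: M.
- by move=> y Iy; exists K0 => //; apply: IK0.
- by move=> [K CK K1]; have [_ _] := CJ _ _ CK K1; apply.
Qed.

Lemma proper_ideal_in_max (m : set R) :
  local_ring_with_max m -> proper_ideal_over I -> I `<=` m.
Proof.
move=> [_ m_unique] [HI _ nI1]; have [A [PA Amax]] := Zorn_bigcup chain_union_proper.
have I0 : I 0 by case: HI.
have [A0|[HA IA nA1]] := PA.
  exfalso; apply: (Amax I); last by rewrite /=; right; split.
  by rewrite A0; split; [exact: sub0set | move/(_ 0 I0)].
suff maxA : maximal_ideal A by rewrite -(m_unique A maxA).
split=> // J HJ AJ; have [J1|nJ1] := pselect (J 1).
  right; apply/seteqP; split=> // r _; rewrite -[r]mulr1; case: HJ => _ _; exact.
have [<-|AJ'] := pselect (A = J); first by left.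
exfalso; apply: (Amax J); last by rewrite /=; right; split=> //; apply: subset_trans AJ.
by split=> // JA; apply: AJ'; apply/seteqP.
Qed.
End LocalRing.

Lemma injective_extend (R : comNzRingType) (E P X : lmodType R) (S : set P)
    (p : P -> X) (phi : P -> E) :
  injective_module E -> is_submodule S -> linear p -> linear phi ->
  (forall y, S y -> p y = 0 -> phi y = 0) ->
  exists h : rhom X E, forall y, S y -> h (p y) = phi y.
Proof.
move=> Einj HS p_lin phi_lin ker_phi.
have HW := image_submodule p_lin HS; pose W := submod_type HW.
have preimage (w : W) : exists y, S y /\ p y = w.
  by have /asboolP[y] := submod_valP w; exists y.
pose pre (w : W) := projT1 (cid (preimage w)).
have [S_pre p_pre] : (forall w, S (pre w)) /\ (forall w, p (pre w) = w :> X).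
  by split=> w; case: (projT2 (cid (preimage w))).
pose g (w : W) := phi (pre w).
(* g is well defined: any preimage in S gives the same value *)
have gE (w : W) y : S y -> p y = w -> g w = phi y.
  move=> Sy pyw; apply/eqP; rewrite -subr_eq0 -(linB phi_lin); apply/eqP/ker_phi.
    exact: submodule_sub.
  by rewrite (linB p_lin) p_pre pyw subrr.
have g_lin : linear g.
  move=> r w1 w2; rewrite (gE _ (r *: pre w1 + pre w2)).
  - by rewrite (linD phi_lin) (linZ phi_lin).
  - by case: HS => _ SD SZ; apply: SD => //; apply: SZ.
  - by rewrite (linD p_lin) (linZ p_lin) !p_pre.
have [h hE] := Einj _ _ (@submod_val _ _ _ HW) (as_linear g_lin) val_inj.
exists (hom_of (linearP h)) => y Sy /=.
have Wpy : p y \in submod_pred HW by apply/asboolP; exists y.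
by have /= -> := hE (SubmodElt Wpy); apply: gE.
Qed.

Section Orthogonal.
Variables (R : comNzRingType) (E X : lmodType R).
Implicit Types (S : set X) (T : set (rhom X E)) (a : set R).

Definition perp S : set (rhom X E) := [set g | forall x, S x -> g x = 0].

Definition preperp T : set X := [set x | forall g, T g -> g x = 0].

Lemma perp_submodule S : is_submodule (perp S).
Proof.
split=> [x _|f g Hf Hg x Sx|r f Hf x Sx] //.
- by rewrite hom_add_apply Hf ?Hg ?addr0.
- by rewrite hom_scale_apply Hf ?scaler0.
Qed.

Lemma preperp_submodule T : is_submodule (preperp T).
Proof.
split=> [g _|x y Hx Hy g Tg|r x Hx g Tg] /=.
- exact: lin0 (hom_linear g).
- by rewrite (linD (hom_linear g)) Hx ?Hy ?addr0.
- by rewrite (linZ (hom_linear g)) Hx ?scaler0.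
Qed.

Lemma perp_setT : perp setT = @zero_set _ _.
Proof.
apply/seteqP; split=> [g g0|_ -> x _] //.
by apply: hom_ext => x; apply: g0.
Qed.

Lemma perp_zero : perp (@zero_set _ _) = setT.
Proof. by apply/seteqP; split=> // g _ _ ->; apply: lin0 (hom_linear g). Qed.

Lemma preperp_neqT T : is_submodule T -> T <> @zero_set _ _ -> preperp T <> setT.
Proof.
move=> HT /(exists_nonzero HT)[g Tg g0] TT; apply: g0; apply: hom_ext => x.
have : preperp T x by rewrite TT.
exact.
Qed.

Lemma perp_ideal_times a S g :
  perp (ideal_times a S) g <-> forall r, a r -> perp S (r *: g).
Proof.
split=> [g_perp r ar x Sx|g_perp _ [n [r [x [ar Sx ->]]]]].
- rewrite hom_scale_apply -(linZ (hom_linear g)).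
  by apply: g_perp; apply: ideal_times_mem.
- rewrite (lin_sum (hom_linear g)) big1 // => i _.
  by rewrite (linZ (hom_linear g)) -hom_scale_apply; apply: g_perp.
Qed.

Lemma preperp_ideal_times a T x :
  preperp (ideal_times a T) x <-> forall r, a r -> preperp T (r *: x).
Proof.
split=> [x_perp r ar g Tg|x_perp _ [n [r [g [ar Tg ->]]]]].
- rewrite (linZ (hom_linear g)) -hom_scale_apply.
  by apply: x_perp; apply: ideal_times_mem.
- rewrite hom_sum_apply big1 // => i _.
  by rewrite hom_scale_apply -(linZ (hom_linear (g i))); apply: x_perp.
Qed.

Lemma perp_torsion a : perp (ideal_times a setT) = ann_sub setT a.
Proof.
apply/seteqP; split=> g.
- move/perp_ideal_times=> g_perp; split=> // r ar.
  by apply: hom_ext => x; apply: g_perp.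
- by case=> _ g_tor; apply/perp_ideal_times => r ar x _; rewrite g_tor.
Qed.
End Orthogonal.
(* E is not determined by S, so it is an explicit argument of perp *)
Arguments perp {R} E {X} S _.

Section Cogenerator.
Variables (R : comNzRingType) (m : set R) (E : lmodType R).
Hypotheses (R_local : local_ring_with_max m)
  (E_hull : injective_hull_of_residue m E).

(* For x ∉ U, the map U + Rx -> E sending u + r x to iota(r) is well defined,
   since r x ∈ U forces r ∈ m; extend it to X by injectivity. *)
Lemma hull_separates (X : lmodType R) (U : set X) (x : X) :
  is_submodule U -> ~ U x -> exists2 f : rhom X E, perp E U f & f x <> 0.
Proof.
move=> HU Ux; have [E_inj [iota [ker_iota _]]] := E_hull.
have [[_ m1 _] _] := R_local.
have kerE r : iota r = 0 <-> m r by rewrite -ker_iota.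
pose p (y : R^o * X) := y.1 *: x + y.2; pose phi (y : R^o * X) := iota y.1.
have p_lin : linear p.
  by move=> r y z; rewrite /p /= scalerDr scalerDl scalerA addrACA.
have phi_lin : linear phi by move=> r y z; exact: linearP.
(* the ideal of r with r x ∈ U is proper, hence contained in m *)
have ann_x : proper_ideal_over [set r | U (r *: x)] [set r | U (r *: x)].
  case: HU => U0 UD UZ; split=> //=; last by rewrite scale1r.
  split=> /= [|r s Ur Us|r s Us]; first by rewrite scale0r.
  - by rewrite scalerDl; apply: UD.
  - by rewrite -scalerA; apply: UZ.
have := injective_extend (S := [set y | U y.2]) E_inj _ p_lin phi_lin.
case=> [|y Uy py0|h hE].
- by case: HU => U0 UD UZ; split=> /= [|y z|r y]; [| apply: UD | apply: UZ].
- apply/kerE/(proper_ideal_in_max R_local ann_x).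
  by rewrite /= -[y.1 *: x]opprK (addr0_eq py0); apply: submodule_opp.
exists h => [u Uu|].
- by have := hE (0, u) Uu; rewrite /p /phi /= scale0r add0r linear0.
- have := hE (1, 0); rewrite /p /phi /= scale1r addr0 => -> //; last by case: HU.
  by move/kerE.
Qed.

Lemma perp_full (X : lmodType R) (V : set X) :
  is_submodule V -> perp E V = @zero_set _ _ -> V = setT.
Proof.
move=> HV V0; apply: contrapT => /exists_nonmember[x Vx].
have [f f_perp fx] := hull_separates HV Vx.
by move: f_perp; rewrite V0 => /= f0; apply: fx; rewrite f0.
Qed.

Lemma perp_neqT (X : lmodType R) (V : set X) :
  is_submodule V -> V <> @zero_set _ _ -> perp E V <> setT.
Proof.
move=> HV /(exists_nonzero HV)[v Vv v0] VT.
have [f _ fv] := hull_separates (zero_submodule X) v0.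
have : perp E V f by rewrite VT.
by move/(_ v Vv).
Qed.

Lemma preperp_setT (X : lmodType R) : preperp (@setT (rhom X E)) = @zero_set _ _.
Proof.
apply/seteqP; split=> [x x_perp|_ -> g _] /=; last exact: lin0 (hom_linear g).
apply: contrapT => x0; have [f _ fx] := hull_separates (zero_submodule X) x0.
exact/fx/x_perp.
Qed.

Lemma preperp_torsion (X : lmodType R) (a : set R) :
  preperp (ideal_times a (@setT (rhom X E))) = ann_sub setT a.
Proof.
apply/seteqP; split=> x.
- move/preperp_ideal_times=> x_perp; split=> // r ar.
  by have := x_perp r ar; rewrite preperp_setT.
- case=> _ x_tor; apply/preperp_ideal_times => r ar.
  by rewrite x_tor; case: (preperp_submodule (@setT (rhom X E))).
Qed.

Lemma dual_nonzero (X : lmodType R) :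
  @setT X <> @zero_set _ _ <-> @setT (rhom X E) <> @zero_set _ _.
Proof.
split=> [X0 XE0|XE0 X0].
  by apply/X0/esym/perp_full; rewrite ?perp_zero //; exact: zero_submodule.
by apply: XE0; rewrite -perp_zero -X0 perp_setT.
Qed.
End Cogenerator.

(* For f ∈ U^⊥ the map
   (s_i z + u_i)_i ↦ f z on a submodule of X^n is well defined by the torsion
   hypothesis; extending it to h : X^n -> E, its components h_i lie in U^⊥ and
   f = Σ s_i h_i. *)
Section DualDivisibility.
Variables (R : comNzRingType) (E X : lmodType R).
Hypothesis E_inj : injective_module E.

Definition coord_embed n (i : 'I_n) (y : X) : 'I_n -> X :=
  fun j => if j == i then y else 0.

Lemma coord_embed_linear n (i : 'I_n) : linear (coord_embed i).
Proof.
move=> r y z; apply/funext => j; rewrite /coord_embed !fctE.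
by case: (j == i); rewrite ?scaler0 ?addr0.
Qed.

Lemma sum_coord_embed n (v : 'I_n -> X) : \sum_(i < n) coord_embed i (v i) = v.
Proof.
apply/funext => j; rewrite fct_sumE /coord_embed -big_mkcond /=.
by rewrite (big_pred1 j).
Qed.

Lemma perp_divisible (U : set X) (a : set R) :
  is_submodule U -> finitely_generated a ->
  (forall x, (forall r, a r -> U (r *: x)) -> U x) ->
  perp E U `<=` ideal_times a (perp E U).
Proof.
move=> HU [s [s_a s_gen]] no_tor f f_perp; pose n := size s.
pose p (y : X * ('I_n -> X)) : 'I_n -> X := fun i => s`_i *: y.1 + y.2 i.
pose phi (y : X * ('I_n -> X)) := f y.1.
have p_lin : linear p.
  move=> r y z; apply/funext => i; rewrite !fctE /p /= !fctE.
  by rewrite !scalerDr !scalerA [r * _]mulrC addrACA.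
have phi_lin : linear phi by move=> r y z; exact: (hom_linear f).
have HS : is_submodule [set y : X * ('I_n -> X) | forall i, U (y.2 i)].
  case: HU => U0 UD UZ; split=> /= [i|y z Uy Uz i|r y Uy i] //.
  - exact: UD.
  - exact: UZ.
have [|h hE] := injective_extend E_inj HS p_lin phi_lin.
  move=> y Uy py0; apply: f_perp; apply: no_tor => _ /s_gen[c ->].
  rewrite scaler_suml; apply: submodule_sum => // i; rewrite -scalerA.
  case: (HU) => _ _ UZ; apply: UZ.
  have py0_i : s`_i *: y.1 + y.2 i = 0 := congr1 (fun v => v i) py0.
  by rewrite -[_ *: _]opprK (addr0_eq py0_i); apply: submodule_opp.
pose h_i i := hom_of (comp_linear (coord_embed_linear i) (hom_linear h)).
exists n, (fun i => s`_i), h_i; split=> [i|i u Uu /=|].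
- exact/s_a/mem_nth.
- have := hE (0, coord_embed i u); rewrite /p /phi /= (lin0 (hom_linear f)).
  under eq_fun do rewrite scaler0 add0r; apply=> j.
  by rewrite /coord_embed; case: (j == i); case: HU.
- apply: hom_ext => y; rewrite hom_sum_apply.
  have -> : \sum_(i < n) (s`_i *: h_i i) y = \sum_(i < n) h (coord_embed i (s`_i *: y)).
    apply: eq_bigr => i _; rewrite hom_scale_apply /=.
    by rewrite (linZ (coord_embed_linear i)) (linZ (hom_linear h)).
  rewrite -(lin_sum (hom_linear h)) sum_coord_embed.
  have := hE (y, 0); rewrite /p /phi /= => <-; last by case: HU.
  by congr (h _); apply/funext => j; rewrite addr0.
Qed.
End DualDivisibility.

Section Reflexive.
Variables (R : comNzRingType) (m : set R) (E N : lmodType R).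
Hypotheses (R_local : local_ring_with_max m)
  (E_hull : injective_hull_of_residue m E) (N_refl : reflexive_module N E).
Implicit Type T : set (rhom N E).

(* separate f ∉ T by a functional on N°, which is evaluation at some x ∈ N *)
Lemma reflexive_separates T f :
  is_submodule T -> ~ T f -> exists2 x, preperp T x & f x <> 0.
Proof.
move=> HT Tf; have [ev _ ev_evK] := N_refl.
have [phi phi_perp phi_f] := hull_separates R_local E_hull HT Tf.
have ev_phi (g : rhom N E) : g (ev phi) = phi g by rewrite -[in RHS](ev_evK phi).
by exists (ev phi) => [g Tg|]; rewrite ev_phi //; apply: phi_perp.
Qed.

Lemma perp_preperp T : is_submodule T -> perp E (preperp T) `<=` T.
Proof.
move=> HT f f_perp; apply: contrapT => Tf.
by have [x Tx fx] := reflexive_separates HT Tf; apply/fx/f_perp.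
Qed.

Lemma preperp_full T : is_submodule T -> preperp T = @zero_set _ _ -> T = setT.
Proof.
move=> HT T0; apply: contrapT => /exists_nonmember[f Tf].
have [x Tx fx] := reflexive_separates HT Tf.
by move: Tx; rewrite T0 => /= x0; apply: fx; rewrite x0 (lin0 (hom_linear f)).
Qed.
End Reflexive.

Section SimpleDuality.
Variables (R : comNzRingType) (m : set R) (F : set (set R)) (E N : lmodType R).
Hypotheses (R_local : local_ring_with_max m) (F_gabriel : gabriel_topology F)
  (E_hull : injective_hull_of_residue m E).

Local Notation dual := (rhom N E).

Let F_ideal a : F a -> is_ideal a. Proof. by case: F_gabriel => + _ _ _ _; apply. Qed.

(* (a): V ↦ V^⊥ sends proper nonzero F-divisible submodules of N to proper
   nonzero submodules U of N° with N°/U F-torsion-free *)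
Lemma dual_simple_torsion_free :
  simple_F_torsion_free F dual -> simple_F_divisible F N.
Proof.
case=> D0 D_tf D_simple; split.
- exact: (dual_nonzero R_local E_hull N).2 D0.
- move=> a Fa; apply: (perp_full R_local E_hull (ideal_times_submodule _ (F_ideal Fa))).
  by rewrite perp_torsion D_tf.
- move=> V HV V0 VT V_div; apply: (D_simple (perp E V)).
  + exact: perp_submodule.
  + by move/(perp_full R_local E_hull HV).
  + exact: (perp_neqT R_local E_hull HV V0).
  + by move=> a Fa g g_tor; rewrite -(V_div a Fa); apply/perp_ideal_times.
Qed.

(* (b): U ↦ U^⊥ sends proper nonzero U with N/U F-torsion-free to proper
   nonzero F-divisible submodules of N° *)
Lemma dual_simple_divisible : noetherian_ring R ->
  simple_F_divisible F dual -> simple_F_torsion_free F N.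
Proof.
move=> R_noeth [D0 D_div D_simple]; split.
- exact: (dual_nonzero R_local E_hull N).2 D0.
- move=> a Fa.
  rewrite -(preperp_torsion R_local E_hull) (D_div a Fa).
  exact: preperp_setT R_local E_hull N.
- move=> U HU U0 UT U_tf; apply: (D_simple (perp E U)).
  + exact: perp_submodule.
  + by move/(perp_full R_local E_hull HU).
  + exact: (perp_neqT R_local E_hull HU U0).
  + move=> a Fa; apply/seteqP; split.
      exact: (ideal_times_sub (perp_submodule E U)).
    exact: (perp_divisible (proj1 E_hull) HU (R_noeth _ (F_ideal Fa)) (U_tf a Fa)).
Qed.

(* (c), first converse: T ↦ ⊥T transports the simple structure back *)
Lemma reflexive_simple_divisible : reflexive_module N E ->
  simple_F_divisible F N -> simple_F_torsion_free F dual.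
Proof.
move=> N_refl [N0 N_div N_simple]; split.
- exact: (dual_nonzero R_local E_hull N).1 N0.
- by move=> a Fa; rewrite -(perp_torsion E N) (N_div a Fa) perp_setT.
- move=> U HU U0 UT U_tf; apply: (N_simple (preperp U)).
  + exact: preperp_submodule.
  + by move/(preperp_full R_local E_hull N_refl HU).
  + exact: preperp_neqT.
  + move=> a Fa; apply/seteqP; split.
      exact: (ideal_times_sub (preperp_submodule U)).
    move=> x Ux; apply: contrapT => aUx.
    have [g /perp_ideal_times g_perp gx] :=
      hull_separates R_local E_hull (ideal_times_submodule _ (F_ideal Fa)) aUx.
    apply/gx/Ux/(U_tf a Fa) => r ar.
    exact: (perp_preperp R_local E_hull N_refl HU (g_perp r ar)).
Qed.

Lemma reflexive_simple_torsion_free : reflexive_module N E ->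
  simple_F_torsion_free F N -> simple_F_divisible F dual.
Proof.
move=> N_refl [N0 N_tf N_simple]; split.
- exact: (dual_nonzero R_local E_hull N).1 N0.
- move=> a Fa; apply: (preperp_full R_local E_hull N_refl).
    exact: ideal_times_submodule (F_ideal Fa).
  by rewrite (preperp_torsion R_local E_hull) N_tf.
- move=> V HV V0 VT V_div; apply: (N_simple (preperp V)).
  + exact: preperp_submodule.
  + by move/(preperp_full R_local E_hull N_refl HV).
  + exact: preperp_neqT.
  + by move=> a Fa x x_tor; rewrite -(V_div a Fa); apply/preperp_ideal_times.
Qed.
End SimpleDuality.

Theorem lemma1p7 (R : comNzRingType) (m : set R) (F : set (set R))
    (E N : lmodType R) :
  noetherian_ring R -> local_ring_with_max m -> gabriel_topology F ->
  injective_hull_of_residue m E ->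
  [/\ (simple_F_torsion_free F (rhom N E) -> simple_F_divisible F N),
      (simple_F_divisible F (rhom N E) -> simple_F_torsion_free F N) &
      (reflexive_module N E ->
         (simple_F_divisible F N -> simple_F_torsion_free F (rhom N E)) /\
         (simple_F_torsion_free F N -> simple_F_divisible F (rhom N E)))].
Proof.
move=> R_noeth R_local F_gabriel E_hull; split.
- exact: (dual_simple_torsion_free R_local F_gabriel E_hull).
- exact: (dual_simple_divisible R_local F_gabriel E_hull R_noeth).
- move=> N_refl; split.
  + exact: (reflexive_simple_divisible R_local F_gabriel E_hull N_refl).
  + exact: (reflexive_simple_torsion_free R_local F_gabriel E_hull N_refl).
Qed.
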